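(* Let $U$ be a $d\times d$ unitary matrix, $U_{ij}=\langle a_i|b_j\rangle$ for two orthonormal bases $\{|a_i\rangle\}$, $\{|b_j\rangle\}$ of $\mathbb{C}^d$, and let $p_i=\langle a_i|\rho|a_i\rangle$, $q_j=\langle b_j|\rho|b_j\rangle$ for a state $\rho$ on $\mathbb{C}^d$. For $k=1,\dots,d$ let $s_k=\max\{\|M\|: M \text{ a submatrix of } U \text{ with } \#\mathrm{cols}(M)+\#\mathrm{rows}(M)=k+1\}$, where $\|M\|$ is the largest singular value, and let $W=(s_1,s_2-s_1,\dots,s_d-s_{d-1})$. Then for every $\alpha\ge0$, $$T_\alpha(p)+T_\alpha(q)\ge T_\alpha(W).$$
   Context: The Tsallis (Havrda–Charvat) entropy of order $\alpha\neq1$ of a probability vector $x$ is $T_\alpha(x)=\frac{1}{1-\alpha}\left(\sum_i x_i^\alpha-1\right)$; for $\alpha=1$ it is understood as its limit, the Shannon entropy $-\sum_i x_i\ln x_i$. A submatrix is obtained by selecting a nonempty set of rows and a nonempty set of columns. *)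

From HB Require Import structures.
From mathcomp Require Import all_boot all_order all_algebra.
From mathcomp Require Import complex.
From mathcomp Require Import boolp classical_sets reals exp.
Set Implicit Arguments. Unset Strict Implicit. Unset Printing Implicit Defensive.
Import Order.TTheory GRing.Theory Num.Theory.
Local Open Scope ring_scope.

Definition adjmx (R : realType) m n (M : 'M[R[i]]_(m, n)) : 'M[R[i]]_(n, m) :=
  (map_mx (@conjc R) M)^T.

Definition submx_of (R : realType) d (U : 'M[R[i]]_d) (A B : {set 'I_d}) :
  'M[R[i]]_(#|A|, #|B|) :=
  \matrix_(i < #|A|, j < #|B|) U (enum_val i) (enum_val j).

Definition sing_max (R : realType) m n (M : 'M[R[i]]_(m, n)) : R :=
  Num.sqrt (sup [set lam : R | eigenvalue (adjmx M *m M) (lam%:C)%C]).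

Definition s_seq (R : realType) d (U : 'M[R[i]]_d) (k : nat) : R :=
  if k is 0 then 0 else
  sup [set x : R | exists A B : {set 'I_d},
         [/\ (0 < #|A|)%N, (0 < #|B|)%N, (#|A| + #|B| = k.+1)%N &
             x = sing_max (submx_of U A B)]].

Definition Wvec (R : realType) d (U : 'M[R[i]]_d) : 'I_d -> R :=
  fun k => s_seq U k.+1 - s_seq U k.

Definition tsallis (R : realType) (I : finType) (alpha : R) (x : I -> R) : R :=
  if alpha == 1 then - \sum_i x i * ln (x i)
  else (1 - alpha)^-1 * (\sum_(i | 0 < x i) powR (x i) alpha - 1).

Definition is_state (R : realType) d (rho : 'M[R[i]]_d) : Prop :=
  [/\ adjmx rho = rho,
      (forall v : 'cV[R[i]]_d, 0 <= (adjmx v *m rho *m v) 0 0) &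
      \tr rho = 1].

(* the columns of A form an orthonormal basis of C^d *)
Definition onb (R : realType) d (A : 'M[R[i]]_d) : Prop := adjmx A *m A = 1%:M.

(* Sort the 2d entries of p and q decreasingly.  A Landau-Pollak type bound
   p(S) + q(T) <= 1 + ||U_{S,T}|| shows that the k largest of them sum to at
   most 1 + s_(k-1) (read s_j = 1 for j >= d), which is the sum of the first k
   entries of (1, W_1, ..., W_d, 0, ..., 0).  Both vectors sum to 2, so this
   vector majorizes (p, q), and Karamata's inequality for the concave summand
   x |-> (x^alpha - x) / (1 - alpha) of T_alpha, which vanishes at 0 and 1,
   gives T_alpha(p) + T_alpha(q) >= T_alpha(W).
   For a pure state psi the bound comes from Cauchy-Schwarz applied to psi and
   the sum of its projections onto span {a_i | i in S} and span {b_j | j in T},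
   whose inner product is controlled by ||U_{S,T}||; mixed states are convex
   combinations of pure ones. *)

From HB Require Import structures.
From mathcomp Require Import all_boot all_order all_algebra.
From mathcomp Require Import complex.
From mathcomp Require Import boolp classical_sets reals exp.
From mathcomp Require Import sesquilinear spectral.
From mathcomp Require Import ring lra zify.
Set Implicit Arguments. Unset Strict Implicit. Unset Printing Implicit Defensive.
Import Order.TTheory GRing.Theory Num.Theory.
Local Open Scope ring_scope.

Section Bernoulli.
Variables (R : realType) (alpha : R).
Hypothesis alpha_ge0 : 0 <= alpha.

Lemma powR_bernoulli_le t : 0 < t -> alpha <= 1 -> powR t alpha <= 1 + alpha * (t - 1).
Proof.
move=> t_gt0 alpha_le1; have [->|alpha_neq0] := eqVneq alpha 0.
  by rewrite powRr0 mul0r addr0.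
have [->|alpha_neq1] := eqVneq alpha 1; first by rewrite powRr1 ?(ltW t_gt0); lra.
have alpha_gt0 : 0 < alpha by rewrite lt_neqAle eq_sym alpha_neq0.
have alpha_lt1 : alpha < 1 by rewrite lt_neqAle alpha_neq1.
(* Young's inequality with the conjugate exponents 1/alpha and 1/(1-alpha) *)
have inv_alpha_gt0 : 0 < alpha^-1 by rewrite invr_gt0.
have inv_alpha'_gt0 : 0 < (1 - alpha)^-1 by rewrite invr_gt0 subr_gt0.
have := conjugate_powR (powR_ge0 t alpha) ler01 inv_alpha_gt0 inv_alpha'_gt0.
rewrite !invrK addrC subrK mulr1 -powRrM mulfV // powRr1 ?(ltW t_gt0) // powR1.
by move/(_ erefl); lra.
Qed.

Lemma powR_bernoulli_ge t : 0 < t -> 1 <= alpha -> 1 + alpha * (t - 1) <= powR t alpha.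
Proof.
move=> t_gt0 alpha_ge1; have [->|alpha_neq1] := eqVneq alpha 1.
  by rewrite powRr1 ?(ltW t_gt0); lra.
have alpha_gt1 : 1 < alpha by rewrite lt_neqAle eq_sym alpha_neq1.
have alpha_gt0 : 0 < alpha by lra.
(* Young's inequality with the conjugate exponents alpha and alpha/(alpha-1) *)
have alpha'_gt0 : 0 < alpha / (alpha - 1) by rewrite divr_gt0 // subr_gt0.
have := conjugate_powR (ltW t_gt0) ler01 alpha_gt0 alpha'_gt0.
rewrite invf_div.
have -> : alpha^-1 + (alpha - 1) / alpha = 1 by field; rewrite gt_eqF.
move/(_ erefl); rewrite mulr1 powR1 => /(ler_wpM2l (ltW alpha_gt0)).
have -> : alpha * (t `^ alpha / alpha + 1 * ((alpha - 1) / alpha)) = t `^ alpha + (alpha - 1).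
  by field; rewrite gt_eqF.
lra.
Qed.

Lemma powR_bernoulli t : 0 < t -> alpha != 1 ->
  (1 - alpha)^-1 * (powR t alpha - 1 - alpha * (t - 1)) <= 0.
Proof.
move=> t_gt0; case: (ltgtP alpha 1) => [alpha_lt1|alpha_gt1|//] _.
- rewrite pmulr_rle0 ?invr_gt0 ?subr_gt0 //.
  by have := powR_bernoulli_le t_gt0 (ltW alpha_lt1); lra.
- rewrite nmulr_rle0 ?invr_lt0 ?subr_lt0 //.
  by have := powR_bernoulli_ge t_gt0 (ltW alpha_gt1); lra.
Qed.

End Bernoulli.

Section TsallisTerm.
Variables (R : realType) (alpha : R).
Hypothesis alpha_ge0 : 0 <= alpha.

(* The [- x] makes the summand vanish at [1]; it adds up to the [- 1] of
   [tsallis] over a probability vector. *)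
Definition tsallis_term (x : R) : R :=
  if alpha == 1 then - (x * ln x)
  else (1 - alpha)^-1 * ((if 0 < x then powR x alpha else 0) - x).

Definition tsallis_slope (x : R) : R :=
  if alpha == 1 then - ln x - 1
  else (1 - alpha)^-1 * (alpha * powR x (alpha - 1) - 1).

Lemma tsallis_term0 : tsallis_term 0 = 0.
Proof. by rewrite /tsallis_term ltxx mul0r oppr0 addr0 mulr0 if_same. Qed.

Lemma tsallis_term1 : tsallis_term 1 = 0.
Proof. by rewrite /tsallis_term ltr01 powR1 ln1 mulr0 oppr0 subrr mulr0 if_same. Qed.

Lemma tsallis_sum_term (I : finType) (x : I -> R) : \sum_i x i = 1 ->
  tsallis alpha x = \sum_i tsallis_term (x i).
Proof.
move=> x_sum1; rewrite /tsallis /tsallis_term; case: ifP => _; first by rewrite -sumrN.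
by rewrite -mulr_sumr sumrB x_sum1 -big_mkcond.
Qed.

Lemma tsallis_term_tangent x y : 0 < x -> 0 <= y ->
  tsallis_term y <= tsallis_term x + tsallis_slope x * (y - x).
Proof.
move=> x_gt0 y_ge0; rewrite /tsallis_term /tsallis_slope x_gt0.
case: ifP => [/eqP alpha1|/negbT alpha_neq1].
  have [->|y_neq0] := eqVneq y 0; first by rewrite mul0r oppr0; nra.
  have y_gt0 : 0 < y by rewrite lt_neqAle eq_sym y_neq0.
  have : -1 < x / y - 1 by have := divr_gt0 x_gt0 y_gt0; lra.
  move/le_ln1Dx; rewrite addrC subrK ln_div ?posrE // => /(ler_wpM2l (ltW y_gt0)).
  rewrite !mulrBr mulrCA mulfV ?gt_eqF // !mulr1; nra.
set k := (1 - alpha)^-1; set X := powR x alpha; set P := powR x (alpha - 1).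
have PX : P * x = X.
  by rewrite /P /X -{2}(powRr1 (ltW x_gt0)) -powRD ?subrK // (gt_eqF x_gt0) implybT.
rewrite -subr_ge0.
case: ifP => [y_gt0|/negbT]; last first.
  rewrite -leNgt => y_le0; have -> : y = 0 by apply/eqP; rewrite eq_le y_le0.
  (* [k * (alpha - 1) = -1] *)
  have -> : k * (X - x) + k * (alpha * P - 1) * (0 - x) - k * (0 - 0) = X.
    by rewrite /k -PX; field; rewrite subr_eq0 eq_sym.
  exact: powR_ge0.
pose t := y / x; have y_eq : y = x * t by rewrite /t mulrCA mulfV ?gt_eqF ?mulr1.
have t_gt0 : 0 < t by rewrite divr_gt0.
have -> : k * (X - x) + k * (alpha * P - 1) * (y - x) - k * (powR y alpha - y) =
          - X * (k * (powR t alpha - 1 - alpha * (t - 1))).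
  rewrite y_eq powRM ?(ltW x_gt0) ?(ltW t_gt0) // -/X -PX; ring.
by rewrite mulNr oppr_ge0 mulr_ge0_le0 ?powR_ge0 ?powR_bernoulli.
Qed.

End TsallisTerm.

Lemma abel_summation_le (R : realDomainType) (c z : nat -> R) n :
  (forall i, (i.+1 < n)%N -> c i <= c i.+1) ->
  (forall k, (k <= n)%N -> \sum_(i < k) z i <= 0) ->
  c n.-1 * \sum_(i < n) z i <= \sum_(i < n) c i * z i.
Proof.
elim: n => [|n IHn] c_incr z_sums_le0; first by rewrite !big_ord0 mulr0.
have IH := IHn (fun i lt_in => c_incr i (ltn_trans lt_in (ltnSn _)))
               (fun k le_kn => z_sums_le0 k (leq_trans le_kn (leqnSn _))).
rewrite !big_ord_recr /=; set Z := \sum_(i < n) z i in IH *.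
have c_le : c n.-1 <= c n by case: n {IHn IH Z z_sums_le0} c_incr => // n; apply.
have : (c n - c n.-1) * Z <= 0 by rewrite mulr_ge0_le0 ?subr_ge0 ?z_sums_le0.
nra.
Qed.

Section Karamata.
Variables (R : realType) (f g : R -> R).
Hypothesis f0 : f 0 = 0.
Hypothesis f_tangent : forall x y, 0 < x -> 0 <= y -> f y <= f x + g x * (y - x).

Lemma tangent_slope_nonincr a b : 0 < a -> a <= b -> g b <= g a.
Proof.
move=> a_gt0 le_ab; have b_gt0 := lt_le_trans a_gt0 le_ab.
have := f_tangent a_gt0 (ltW b_gt0); have := f_tangent b_gt0 (ltW a_gt0).
have [->|neq_ab] := eqVneq a b; first by [].
have : a < b by rewrite lt_neqAle neq_ab.
nra.
Qed.

(* Only [x] has to be sorted: the Abel summation runs against the nonincreasing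
   slopes [g (x i)].  Equal totals force the tail of [y] beyond [n] to vanish. *)
Lemma karamata_le (x y : nat -> R) n N : (n <= N)%N ->
  (forall i, (i < n)%N -> 0 < x i) ->
  (forall i j, (i <= j)%N -> (j < n)%N -> x j <= x i) ->
  (forall i, 0 <= y i) ->
  (forall k, (k <= n)%N -> \sum_(i < k) x i <= \sum_(i < k) y i) ->
  \sum_(i < n) x i = \sum_(i < N) y i ->
  \sum_(i < N) f (y i) <= \sum_(i < n) f (x i).
Proof.
move=> le_nN x_gt0 x_decr y_ge0 x_maj x_tot.
have split_N (F : nat -> R) :
    \sum_(i < N) F i = \sum_(i < n) F i + \sum_(n <= i < N) F i.
  by rewrite -!(big_mkord xpredT) (big_cat_nat (leq0n n) le_nN).
have y_tail0 i : (n <= i < N)%N -> y i = 0.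
  have : \sum_(n <= i < N) y i == 0.
    rewrite eq_le sumr_ge0 ?andbT => [|j _]; last exact: y_ge0.
    by have := x_maj n (leqnn n); rewrite x_tot split_N; lra.
  rewrite psumr_eq0 => [/allP/(_ i)|j _]; last exact: y_ge0.
  by rewrite mem_index_iota => /[apply]/eqP.
have tail0 (F : R -> R) : F 0 = 0 -> \sum_(n <= i < N) F (y i) = 0.
  by move=> F0; rewrite big_nat big1 // => i /y_tail0 ->.
rewrite (split_N (f \o y)) /= tail0 // addr0.
have tot_n : \sum_(i < n) x i = \sum_(i < n) y i.
  by rewrite x_tot (split_N y) (tail0 id) ?addr0.
have tangents : \sum_(i < n) f (y i) <=
    \sum_(i < n) f (x i) + \sum_(i < n) g (x i) * (y i - x i).
  by rewrite -big_split /=; apply: ler_sum => i _; apply/f_tangent/y_ge0/x_gt0.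
suff : \sum_(i < n) g (x i) * (y i - x i) <= 0 by lra.
have -> : \sum_(i < n) g (x i) * (y i - x i) = - \sum_(i < n) g (x i) * (x i - y i).
  by rewrite -sumrN; apply: eq_bigr => i _; ring.
rewrite oppr_le0.
have := @abel_summation_le _ (g \o x) (fun i => x i - y i) n.
rewrite sumrB tot_n subrr mulr0; apply.
- by move=> i lt_in; apply/tangent_slope_nonincr/x_decr; rewrite ?x_gt0 // ltnW.
- by move=> k le_kn; rewrite sumrB subr_le0 x_maj.
Qed.

End Karamata.

Section TwoDistributions.
Variables (R : realType) (d : nat) (p q : 'I_d -> R).

Definition pq_entry (v : 'I_d + 'I_d) : R :=
  match v with inl i => p i | inr j => q j end.

Lemma sum_pq_entry_seq (t : seq ('I_d + 'I_d)) : uniq t ->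
  exists S T : {set 'I_d},
    \sum_(v <- t) pq_entry v = \sum_(i in S) p i + \sum_(j in T) q j /\
    (#|S| + #|T| = size t)%N.
Proof.
move=> t_uniq; exists [set i | inl i \in t], [set j | inr j \in t]; split.
  rewrite big_uniq // big_mkcond big_sumType /=.
  rewrite [\sum_(i in _) p i]big_mkcond [\sum_(j in _) q j]big_mkcond.
  by congr (_ + _); apply: eq_bigr => i _; rewrite inE.
rewrite -(card_uniqP t_uniq) -!sum1_card.
rewrite [in RHS]big_mkcond big_sumType /= [X in (X + _)%N]big_mkcond.
rewrite [X in (_ + X)%N]big_mkcond /=.
by congr (_ + _)%N; apply: eq_bigr => i _; rewrite inE.
Qed.

Hypotheses (p_ge0 : forall i, 0 <= p i) (q_ge0 : forall j, 0 <= q j).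
Hypotheses (p_sum1 : \sum_i p i = 1) (q_sum1 : \sum_j q j = 1).

Lemma sum_pq_support (F : R -> R) : F 0 = 0 ->
  \sum_(v <- enum {: 'I_d + 'I_d} | 0 < pq_entry v) F (pq_entry v) =
  \sum_i F (p i) + \sum_j F (q j).
Proof.
move=> F0; rewrite big_enum_cond /= big_mkcond big_sumType /=.
have drop0 (x : R) : 0 <= x -> (if 0 < x then F x else 0) = F x.
  by rewrite le_eqVlt => /predU1P[<-|->]; rewrite ?ltxx ?F0.
by congr (_ + _); apply: eq_bigr => i _; rewrite drop0.
Qed.

Variable s : nat -> R.
Hypotheses (s0 : s 0%N = 0) (s_top : s d = 1) (s_ge0 : forall k, 0 <= s k).
Hypothesis s_nondecr : forall k, (k < d)%N -> s k <= s k.+1.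
Hypothesis pq_le_s : forall S T : {set 'I_d}, (0 < #|S|)%N -> (0 < #|T|)%N ->
  (#|S| + #|T| <= d.+1)%N -> \sum_(i in S) p i + \sum_(j in T) q j <= 1 + s (#|S| + #|T|).-1.

Definition w_pad (i : nat) : R :=
  if i is j.+1 then (if (j < d)%N then s j.+1 - s j else 0) else 1.

Lemma w_pad_ge0 i : 0 <= w_pad i.
Proof. by case: i => [|j] /=; [exact: ler01 | case: ifP => // /s_nondecr; rewrite subr_ge0]. Qed.

Lemma w_pad_prefix_sum m : \sum_(i < m.+1) w_pad i = 1 + s (minn m d).
Proof.
elim: m => [|m IHm]; first by rewrite big_ord1 min0n s0 addr0.
rewrite big_ord_recr IHm [w_pad _]/=; case: (ltnP m d) => [lt_md|le_dm].
  by rewrite /= (minn_idPl lt_md); lra.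
by rewrite /= (minn_idPr (leqW le_dm)) addr0.
Qed.

Lemma pq_prefix_sum_le (t : seq ('I_d + 'I_d)) : uniq t ->
  \sum_(v <- t) pq_entry v <= 1 + s (minn (size t).-1 d).
Proof.
move=> /sum_pq_entry_seq[S [T [-> card_ST]]].
have sum_le1 (F : 'I_d -> R) (A : {set 'I_d}) : (forall i, 0 <= F i) -> \sum_i F i = 1 ->
    \sum_(i in A) F i <= 1.
  by move=> F_ge0 <-; rewrite [X in _ <= X](bigID (mem A)) /= lerDl sumr_ge0.
have [pS_le1 qT_le1] := (sum_le1 p S p_ge0 p_sum1, sum_le1 q T q_ge0 q_sum1).
have s_min_ge0 := s_ge0 (minn (size t).-1 d).
have [S_empty|S_gt0] := posnP #|S|.
  by rewrite (cards0_eq S_empty) big_set0 add0r; lra.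
have [T_empty|T_gt0] := posnP #|T|.
  by rewrite (cards0_eq T_empty) big_set0 addr0; lra.
have [le_ST_d1|lt_d1_ST] := leqP (#|S| + #|T|) d.+1.
  have -> : minn (size t).-1 d = (#|S| + #|T|).-1 by rewrite -card_ST; apply/minn_idPl; lia.
  exact: pq_le_s.
have -> : minn (size t).-1 d = d by apply/minn_idPr; lia.
by rewrite s_top; lra.
Qed.

Variables (f g : R -> R).
Hypotheses (f0 : f 0 = 0) (f1 : f 1 = 0).
Hypothesis f_tangent : forall x y, 0 < x -> 0 <= y -> f y <= f x + g x * (y - x).

Lemma sum_w_pad (N : nat) : (d <= N)%N ->
  \sum_(i < N.+1) f (w_pad i) = \sum_(k < d) f (s k.+1 - s k).
Proof.
move=> le_dN; rewrite big_ord_recl /= f1 add0r.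
rewrite -(big_mkord xpredT (fun i => f (w_pad i.+1))) (big_cat_nat (leq0n d)) //=.
rewrite [X in _ + X]big1_seq => [|i /andP[_]]; last first.
  by rewrite mem_index_iota => /andP[le_di _]; rewrite /= ltnNge le_di f0.
by rewrite addr0 big_mkord; apply: eq_bigr => k _; rewrite /= ltn_ord.
Qed.

Hypothesis d_gt0 : (0 < d)%N.

Lemma sum_concave_increments_le :
  \sum_(k < d) f (s k.+1 - s k) <= \sum_i f (p i) + \sum_j f (q j).
Proof.
pose v0 : 'I_d + 'I_d := inl (Ordinal d_gt0).
pose ge_entry u v := pq_entry v <= pq_entry u.
pose support := [seq v <- enum {: 'I_d + 'I_d} | 0 < pq_entry v].
pose e := sort ge_entry support.
pose x i := pq_entry (nth v0 e i).
have e_sorted : sorted ge_entry e by apply: sort_sorted => u v; apply: le_total.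
have e_uniq : uniq e by rewrite sort_uniq filter_uniq ?enum_uniq.
have sum_e (F : R -> R) :
    F 0 = 0 -> \sum_(v <- e) F (pq_entry v) = \sum_i F (p i) + \sum_j F (q j).
  by move=> F0; rewrite (perm_big _ (permEl (perm_sort _ _))) big_filter sum_pq_support.
have sum_x (F : R -> R) : \sum_(i < size e) F (x i) = \sum_(v <- e) F (pq_entry v).
  by rewrite (big_nth v0) big_mkord.
have le_e_dd : (size e <= (d + d).-1.+1)%N.
  rewrite size_sort size_filter (leq_trans (count_size _ _)) // -cardE card_sum card_ord.
  by lia.
rewrite -(sum_w_pad (N := (d + d).-1)); last by lia.
rewrite -(sum_e f f0) -(sum_x f); apply: (karamata_le f0 f_tangent) => //.
- by move=> i lt_ie; rewrite /x; have := mem_nth v0 lt_ie; rewrite mem_sort mem_filter => /andP[].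
- move=> i j le_ij lt_je.
  have ge_trans : transitive ge_entry by move=> v u w le_vu le_wv; apply: le_trans le_wv le_vu.
  have := sorted_leq_nth ge_trans (fun v => lexx (pq_entry v)) v0 e_sorted.
  by apply; rewrite ?inE // (leq_ltn_trans le_ij).
- exact: w_pad_ge0.
- case=> [|k] le_ke; first by rewrite !big_ord0.
  have -> : \sum_(i < k.+1) x i = \sum_(v <- take k.+1 e) pq_entry v.
    by rewrite (big_nth v0) size_takel // big_mkord; apply: eq_bigr => i _; rewrite nth_take.
  rewrite w_pad_prefix_sum; apply: le_trans (pq_prefix_sum_le (take_uniq k.+1 e_uniq)) _.
  by rewrite size_takel.
- rewrite (sum_x id) (sum_e id) // p_sum1 q_sum1 w_pad_prefix_sum (minn_idPr _) ?s_top //.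
  by lia.
Qed.

End TwoDistributions.

Section Adjoint.
Variable R : realType.
Local Notation C := R[i].

Lemma adjmx_conjT m n (A : 'M[C]_(m, n)) : adjmx A = (A ^t* )%sesqui.
Proof. by rewrite /adjmx map_trmx. Qed.

Lemma adjmxE m n (A : 'M[C]_(m, n)) i j : adjmx A i j = (A j i)^*.
Proof. by rewrite !mxE. Qed.

Lemma adjmxK m n (A : 'M[C]_(m, n)) : adjmx (adjmx A) = A.
Proof. by rewrite !adjmx_conjT trmxCK. Qed.

Lemma adjmxM m n p (A : 'M[C]_(m, n)) (B : 'M[C]_(n, p)) :
  adjmx (A *m B) = adjmx B *m adjmx A.
Proof. by rewrite !adjmx_conjT trmx_mul map_mxM. Qed.

Lemma adjmxD m n (A B : 'M[C]_(m, n)) : adjmx (A + B) = adjmx A + adjmx B.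
Proof. by apply/matrixP => i j; rewrite !mxE rmorphD. Qed.

Lemma adjmx_eq0 m n (A : 'M[C]_(m, n)) : (adjmx A == 0) = (A == 0).
Proof.
apply/eqP/eqP => [A'0|->]; last by rewrite /adjmx map_mx0 trmx0.
by rewrite -[A]adjmxK A'0 /adjmx map_mx0 trmx0.
Qed.

Lemma mulmx_adj_diagE m n (X : 'M[C]_(m, n)) (D : 'rV[C]_m) i :
  (adjmx X *m diag_mx D *m X) i i = \sum_k D 0 k * `|X k i| ^+ 2.
Proof.
by rewrite mxE; apply: eq_bigr => k _; rewrite mul_mx_diag mxE adjmxE normCK; ring.
Qed.

Definition cnorm2 n (y : 'cV[C]_n) : C := (adjmx y *m y) 0 0.

Lemma cnorm2E n (y : 'cV[C]_n) : cnorm2 y = \sum_k `|y k 0| ^+ 2.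
Proof. by rewrite /cnorm2 mxE; apply: eq_bigr => k _; rewrite adjmxE normCK mulrC. Qed.

Lemma cnorm2_ge0 n (y : 'cV[C]_n) : 0 <= cnorm2 y.
Proof. by rewrite cnorm2E sumr_ge0 // => k _; rewrite exprn_ge0. Qed.

Lemma cnorm2_gt0 n (y : 'cV[C]_n) : y != 0 -> 0 < cnorm2 y.
Proof.
move=> y_neq0; rewrite lt_def cnorm2_ge0 andbT cnorm2E.
apply: contraNneq y_neq0 => /psumr_eq0P y0; apply/eqP/colP => k.
have /eqP := y0 (fun k _ => exprn_ge0 2 (normr_ge0 (y k 0))) k isT.
by rewrite sqrf_eq0 normr_eq0 mxE => /eqP.
Qed.

Lemma cnorm2_unitary m n (P : 'M[C]_(m, n)) (y : 'cV[C]_n) :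
  adjmx P *m P = 1%:M -> cnorm2 (P *m y) = cnorm2 y.
Proof.
by move=> P_unitary; rewrite /cnorm2 adjmxM -mulmxA (mulmxA (adjmx P)) P_unitary mul1mx.
Qed.

Lemma cnorm2D n (y z : 'cV[C]_n) :
  cnorm2 (y + z) = cnorm2 y + cnorm2 z + ((adjmx y *m z) 0 0 + ((adjmx y *m z) 0 0)^*).
Proof.
have -> : ((adjmx y *m z) 0 0)^* = (adjmx z *m y) 0 0.
  by rewrite -adjmxE adjmxM adjmxK.
by rewrite /cnorm2 adjmxD mulmxDl !mulmxDr !mxE; ring.
Qed.

Lemma cauchy_schwarz_cnorm2 n (y z : 'cV[C]_n) :
  `|(adjmx y *m z) 0 0| ^+ 2 <= cnorm2 y * cnorm2 z.
Proof.
have dotE (u v : 'cV[C]_n) : (adjmx u *m v) 0 0 = dotmx v^T u^T.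
  rewrite dotmxE !mxE; apply: eq_bigr => k _.
  by rewrite -adjmx_conjT !adjmxE !mxE mulrC.
by rewrite /cnorm2 !dotE mulrC; apply: (CauchySchwarz (@dotmx C n)).
Qed.

End Adjoint.

Section MaxEigenvalue.
Variable R : realType.
Local Notation C := R[i].

Lemma hermitian_unitary_diag n (X : 'M[C]_n) : adjmx X = X ->
  exists (P : 'M[C]_n) (D : 'rV[C]_n),
    [/\ adjmx P *m P = 1%:M, P *m adjmx P = 1%:M, D \is a realmx &
        X = adjmx P *m diag_mx D *m P].
Proof.
move=> X_adj; have X_herm : X \is hermsymmx.
  by apply/is_hermitianmxP; rewrite expr0 scale1r -adjmx_conjT X_adj.
have PP' : spectralmx X *m adjmx (spectralmx X) = 1%:M.
  by rewrite adjmx_conjT; apply/unitarymxP/spectral_unitarymx.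
exists (spectralmx X), (spectral_diag X); split => //.
- exact: mulmx1C.
- exact: hermitian_spectral_diag_real.
- rewrite adjmx_conjT -invmx_unitary ?spectral_unitarymx //.
  exact/orthomx_spectralP/hermitian_normalmx.
Qed.

Lemma hermitian_max_eigen n (H : 'M[C]_n) : (0 < n)%N -> adjmx H = H ->
  exists lam : R,
    [/\ forall l : R, eigenvalue H l%:C%C -> l <= lam,
        eigenvalue H lam%:C%C,
        forall y : 'cV_n, (adjmx y *m H *m y) 0 0 <= lam%:C%C * cnorm2 y &
        exists2 y : 'cV_n, y != 0 & (adjmx y *m H *m y) 0 0 = lam%:C%C * cnorm2 y].
Proof.
move=> n_gt0 /hermitian_unitary_diag[P [D [P'P PP' /mxOverP D_real H_eq]]].
pose Dr k := complex.Re (D 0 k); have DE k : D 0 k = (Dr k)%:C%C by rewrite RRe_real.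
have [k0 _ Dr_max] := @arg_maxP _ _ _ (Ordinal n_gt0) xpredT Dr isT.
exists (Dr k0).
have bound (y : 'cV_n) : (adjmx y *m H *m y) 0 0 <= (Dr k0)%:C%C * cnorm2 y.
  rewrite -(cnorm2_unitary y P'P) cnorm2E mulr_sumr.
  have -> : adjmx y *m H *m y = adjmx (P *m y) *m diag_mx D *m (P *m y).
    by rewrite H_eq adjmxM !mulmxA.
  rewrite mulmx_adj_diagE; apply: ler_sum => k _.
  by rewrite DE; apply: ler_wpM2r; [rewrite exprn_ge0 | rewrite lecR; apply: Dr_max].
pose u0 : 'rV_n := delta_mx 0 k0 *m P.
have u0_eig : u0 *m H = (Dr k0)%:C%C *: u0.
  by rewrite /u0 H_eq !mulmxA -(mulmxA _ P) PP' mulmx1 -rowE row_diag_mx -DE -scalemxAl.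
have u0_neq0 : u0 != 0.
  apply: contraTneq isT => u00.
  have : u0 *m adjmx P = delta_mx 0 k0 by rewrite /u0 -mulmxA PP' mulmx1.
  rewrite u00 mul0mx => /matrixP /(_ 0 k0).
  by rewrite !mxE !eqxx => /eqP; rewrite eq_sym oner_eq0.
have quad_eig (v : 'rV_n) l : v *m H = l *: v ->
    (adjmx (adjmx v) *m H *m adjmx v) 0 0 = l * cnorm2 (adjmx v).
  by move=> v_eig; rewrite /cnorm2 adjmxK v_eig -scalemxAl mxE.
split => //; last 2 first.
- by apply/eigenvalueP; exists u0.
- by exists (adjmx u0); rewrite ?adjmx_eq0 ?(quad_eig _ _ u0_eig).
move=> l /eigenvalueP[v /quad_eig v_quad v_neq0].
have := bound (adjmx v); rewrite v_quad ler_pM2r ?lecR //.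
by rewrite cnorm2_gt0 ?adjmx_eq0.
Qed.

Definition sing_max2 m n (M : 'M[C]_(m, n)) : R :=
  sup [set l : R | eigenvalue (adjmx M *m M) l%:C%C].

Lemma sing_maxE m n (M : 'M[C]_(m, n)) : sing_max M = Num.sqrt (sing_max2 M).
Proof. by []. Qed.

Lemma sing_max2_spec m n (M : 'M[C]_(m, n)) : (0 < n)%N ->
  [/\ forall y, cnorm2 (M *m y) <= (sing_max2 M)%:C%C * cnorm2 y,
      exists2 y, y != 0 & cnorm2 (M *m y) = (sing_max2 M)%:C%C * cnorm2 y &
      0 <= sing_max2 M].
Proof.
move=> n_gt0; have H_adj : adjmx (adjmx M *m M) = adjmx M *m M by rewrite adjmxM adjmxK.
have [lam [lam_ub lam_eig bound [y y_neq0 y_att]]] := hermitian_max_eigen n_gt0 H_adj.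
have -> : sing_max2 M = lam.
  apply/eqP; rewrite eq_le; apply/andP; split.
    by apply: ge_sup; [exists lam | move=> l; apply: lam_ub].
  by apply: ub_le_sup => //; exists lam => l; apply: lam_ub.
have quadE (z : 'cV_n) : cnorm2 (M *m z) = (adjmx z *m (adjmx M *m M) *m z) 0 0.
  by rewrite /cnorm2 adjmxM !mulmxA.
split => [z||]; rewrite ?quadE //; first by exists y; rewrite ?quadE.
have := cnorm2_ge0 (M *m y); rewrite quadE y_att.
by rewrite pmulr_lge0 ?cnorm2_gt0 ?lecR.
Qed.

End MaxEigenvalue.

Lemma ler_psum_sub (R : numDomainType) (I : finType) (P Q : pred I) (F : I -> R) :
  (forall i, 0 <= F i) -> (forall i, P i -> Q i) ->
  \sum_(i | P i) F i <= \sum_(i | Q i) F i.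
Proof.
move=> F_ge0 PQ; rewrite big_mkcond [X in _ <= X]big_mkcond; apply: ler_sum => i _.
by case: ifP => [/PQ ->|_] //; case: ifP.
Qed.

Section Submatrix.
Variables (R : realType) (d : nat) (U : 'M[R[i]]_d).
Hypothesis U_onb : onb U.

Definition extend_col (T : {set 'I_d}) (y : 'cV[R[i]]_#|T|) : 'cV[R[i]]_d :=
  \col_j \sum_l (enum_val l == j)%:R * y l 0.

Lemma extend_colE (T : {set 'I_d}) (y : 'cV[R[i]]_#|T|) l :
  extend_col y (enum_val l) 0 = y l 0.
Proof.
rewrite mxE (bigD1 l) //= eqxx mul1r big1 ?addr0 // => l' /negbTE neq_l'l.
by rewrite (inj_eq enum_val_inj) neq_l'l mul0r.
Qed.

Lemma extend_col_out (T : {set 'I_d}) (y : 'cV[R[i]]_#|T|) j :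
  j \notin T -> extend_col y j 0 = 0.
Proof.
move=> jNT; rewrite mxE big1 // => l _.
by case: eqP => [l_j|]; [move: (enum_valP l); rewrite l_j (negbTE jNT) | rewrite mul0r].
Qed.

Lemma submx_of_mulE (S T : {set 'I_d}) (y : 'cV[R[i]]_#|T|) k :
  (submx_of U S T *m y) k 0 = (U *m extend_col y) (enum_val k) 0.
Proof.
rewrite !mxE; under [RHS]eq_bigr do rewrite mxE mulr_sumr.
rewrite exchange_big /=; apply: eq_bigr => l _.
rewrite mxE (bigD1 (enum_val l)) //= big1 ?addr0 ?eqxx ?mul1r //.
by move=> j /negbTE neq_jl; rewrite eq_sym neq_jl mul0r mulr0.
Qed.

Lemma cnorm2_submx_of_mul (S T : {set 'I_d}) (y : 'cV[R[i]]_#|T|) :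
  cnorm2 (submx_of U S T *m y) = \sum_(i in S) `|(U *m extend_col y) i 0| ^+ 2.
Proof.
rewrite cnorm2E (big_enum_val (fun i => `|(U *m extend_col y) i 0| ^+ 2)).
by apply: eq_bigr => k _; rewrite submx_of_mulE.
Qed.

Lemma cnorm2_extend_col (T : {set 'I_d}) (y : 'cV[R[i]]_#|T|) :
  cnorm2 (extend_col y) = cnorm2 y.
Proof.
rewrite !cnorm2E (bigID (mem T)) /= [X in _ + X]big1 ?addr0 => [|j /extend_col_out ->].
  rewrite (big_enum_val (fun j => `|extend_col y j 0| ^+ 2)).
  by apply: eq_bigr => k _; rewrite (extend_colE y k).
by rewrite normr0 expr0n.
Qed.

Lemma extend_col_restrict (T : {set 'I_d}) (z : 'cV[R[i]]_d) :
  (forall j, j \notin T -> z j 0 = 0) ->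
  extend_col (\col_(k < #|T|) z (enum_val k) 0) = z.
Proof.
move=> z_out; apply/colP => j; have [jT|jNT] := boolP (j \in T).
  by rewrite -(enum_rankK_in jT jT) extend_colE mxE.
by rewrite extend_col_out ?z_out.
Qed.

Lemma sing_max2_submx_le1 (S T : {set 'I_d}) : (0 < #|T|)%N -> sing_max2 (submx_of U S T) <= 1.
Proof.
move=> T_gt0; have [_ [y y_neq0 y_att] _] := sing_max2_spec (submx_of U S T) T_gt0.
suff : cnorm2 (submx_of U S T *m y) <= 1 * cnorm2 y.
  by rewrite y_att (ler_pM2r (cnorm2_gt0 y_neq0)) lecR.
rewrite mul1r cnorm2_submx_of_mul -(cnorm2_extend_col y) -(cnorm2_unitary _ U_onb) cnorm2E.
by apply: (@ler_psum_sub _ _ (mem S) xpredT) => // i; rewrite exprn_ge0.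
Qed.

Lemma sing_max2_submx_mono (S S' T : {set 'I_d}) : S \subset S' -> (0 < #|T|)%N ->
  sing_max2 (submx_of U S T) <= sing_max2 (submx_of U S' T).
Proof.
move=> /fintype.subsetP sub_SS' T_gt0.
have [_ [y y_neq0 y_att] _] := sing_max2_spec (submx_of U S T) T_gt0.
have [bound _ _] := sing_max2_spec (submx_of U S' T) T_gt0.
have : cnorm2 (submx_of U S T *m y) <= cnorm2 (submx_of U S' T *m y).
  rewrite !cnorm2_submx_of_mul.
  by apply: (@ler_psum_sub _ _ (mem S) (mem S')) => // i; rewrite exprn_ge0.
rewrite y_att => /le_trans /(_ (bound y)).
by rewrite (ler_pM2r (cnorm2_gt0 y_neq0)) lecR.
Qed.

Lemma sing_max2_full_rows (T : {set 'I_d}) : (0 < #|T|)%N ->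
  sing_max2 (submx_of U finset.setT T) = 1.
Proof.
move=> T_gt0; apply/eqP; rewrite eq_le sing_max2_submx_le1 //=.
have [bound _ _] := sing_max2_spec (submx_of U finset.setT T) T_gt0.
pose y : 'cV[R[i]]_#|T| := const_mx 1.
have y_neq0 : y != 0.
  by apply/negP => /eqP /matrixP /(_ (Ordinal T_gt0) 0); rewrite !mxE => /eqP; rewrite oner_eq0.
have := bound y; rewrite cnorm2_submx_of_mul.
have -> : \sum_(i in finset.setT) `|(U *m extend_col y) i 0| ^+ 2 = cnorm2 y.
  rewrite -(cnorm2_extend_col y) -(cnorm2_unitary _ U_onb) cnorm2E.
  by apply: eq_bigl => i; rewrite finset.in_setT.
rewrite -{1}[cnorm2 y]mul1r (ler_pM2r (cnorm2_gt0 y_neq0)).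
by rewrite -[1]/(1%:C%C) lecR.
Qed.

Lemma submx_of_bound (S T : {set 'I_d}) (z : 'cV[R[i]]_d) : (0 < #|T|)%N ->
  (forall j, j \notin T -> z j 0 = 0) ->
  \sum_(i in S) `|(U *m z) i 0| ^+ 2 <= (sing_max2 (submx_of U S T))%:C%C * cnorm2 z.
Proof.
move=> T_gt0 z_out; have [bound _ _] := sing_max2_spec (submx_of U S T) T_gt0.
have := bound (\col_(k < #|T|) z (enum_val k) 0).
by rewrite cnorm2_submx_of_mul -cnorm2_extend_col extend_col_restrict.
Qed.

End Submatrix.

Lemma landau_pollak_real (R : rcfType) (a b g g' l : R) :
  0 <= a -> 0 <= b -> 0 <= l ->
  (a + b) ^+ 2 <= a + b + 2 * g -> g ^+ 2 + g' ^+ 2 <= a * (l * b) ->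
  a + b <= 1 + Num.sqrt l.
Proof.
move=> a_ge0 b_ge0 l_ge0 sum_le overlap_le.
set s := Num.sqrt l; have s_ge0 : 0 <= s by apply: sqrtr_ge0.
have l_eq : l = s ^+ 2 by rewrite sqr_sqrtr.
(* [g <= s * sqrt (a b) <= s (a + b) / 2] by AM-GM *)
have g_le : g <= s * (a + b) / 2.
  rewrite leNgt; apply/negP => lt_g.
  have sab_ge0 : 0 <= s * (a + b) / 2 by rewrite divr_ge0 // mulr_ge0 // addr_ge0.
  have : (s * (a + b) / 2) ^+ 2 < g ^+ 2.
    by rewrite ltr_pXn2r // ?nnegrE // (le_trans sab_ge0) // ltW.
  have : s ^+ 2 * (a * b) <= (s * (a + b) / 2) ^+ 2.
    have amgm : 4 * (a * b) <= (a + b) ^+ 2.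
      by rewrite -subr_ge0 (_ : _ - _ = (a - b) ^+ 2) ?sqr_ge0 //; ring.
    have -> : (s * (a + b) / 2) ^+ 2 = s ^+ 2 * ((a + b) ^+ 2) / 4 by field.
    by have := ler_wpM2l (sqr_ge0 s) amgm; lra.
  have := sqr_ge0 g'; rewrite l_eq in overlap_le; nra.
have : (a + b) ^+ 2 <= (a + b) * (1 + s) by nra.
nra.
Qed.

Lemma landau_pollak_complex (R : realType) (a b g : R[i]) (l : R) :
  0 <= a -> 0 <= b -> 0 <= l ->
  (a + b) ^+ 2 <= a + b + (g + g^*) -> `|g| ^+ 2 <= a * (l%:C%C * b) ->
  a + b <= 1 + (Num.sqrt l)%:C%C.
Proof.
move=> a_ge0 b_ge0 l_ge0; set ar := complex.Re a; set br := complex.Re b.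
have a_eq : a = ar%:C%C by rewrite RRe_real ?ger0_real.
have b_eq : b = br%:C%C by rewrite RRe_real ?ger0_real.
have ar_ge0 : 0 <= ar by rewrite -lecR -a_eq.
have br_ge0 : 0 <= br by rewrite -lecR -b_eq.
move=> sum_le overlap_le.
have sum_le' : (ar + br) ^+ 2 <= ar + br + 2 * complex.Re g.
  by rewrite -lecR rmorphXn !rmorphD rmorphM /= -a_eq -b_eq rmorph_nat -addcJ.
have overlap_le' : complex.Re g ^+ 2 + complex.Im g ^+ 2 <= ar * (l * br).
  by rewrite -lecR add_Re2_Im2 !rmorphM /= -a_eq -b_eq.
have := landau_pollak_real ar_ge0 br_ge0 l_ge0 sum_le' overlap_le'.
by rewrite -lecR !rmorphD /= -a_eq -b_eq.
Qed.

Lemma onb_adjmx_mul (R : realType) d (A B : 'M[R[i]]_d) :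
  onb A -> onb B -> onb (adjmx A *m B).
Proof.
rewrite /onb => A_onb B_onb.
by rewrite adjmxM adjmxK !mulmxA -(mulmxA _ A) (mulmx1C A_onb) mulmx1.
Qed.

Section MaskCol.
Variables (R : realType) (d : nat) (S : {set 'I_d}).

Definition mask_col (w : 'cV[R[i]]_d) : 'cV[R[i]]_d :=
  \col_i (if i \in S then w i 0 else 0).

Lemma cnorm2_mask_col w : cnorm2 (mask_col w) = \sum_(i in S) `|w i 0| ^+ 2.
Proof.
rewrite cnorm2E [RHS]big_mkcond; apply: eq_bigr => i _.
by rewrite mxE; case: ifP; rewrite ?normr0 ?expr0n.
Qed.

Lemma adjmx_mul_mask_col w : (adjmx w *m mask_col w) 0 0 = \sum_(i in S) `|w i 0| ^+ 2.
Proof.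
rewrite mxE [RHS]big_mkcond; apply: eq_bigr => i _.
by rewrite adjmxE mxE; case: ifP; rewrite ?mulr0 // normCK mulrC.
Qed.

Lemma adjmx_mask_col_mul w z :
  (adjmx (mask_col w) *m z) 0 0 = (adjmx (mask_col w) *m mask_col z) 0 0.
Proof.
by rewrite !mxE; apply: eq_bigr => i _; rewrite !adjmxE !mxE; case: ifP; rewrite ?rmorph0 ?mul0r.
Qed.

End MaskCol.

Section PureState.
Variables (R : realType) (d : nat) (A B : 'M[R[i]]_d).
Hypotheses (A_onb : onb A) (B_onb : onb B).
Variables (S T : {set 'I_d}) (psi : 'cV[R[i]]_d).
Hypotheses (T_gt0 : (0 < #|T|)%N) (psi_unit : cnorm2 psi = 1).

(* [u] and [v] are the projections of [psi] on the spans of the [a_i], [i \in S],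
   and of the [b_j], [j \in T]. *)
Let a := \sum_(i in S) `|(adjmx A *m psi) i 0| ^+ 2.
Let b := \sum_(j in T) `|(adjmx B *m psi) j 0| ^+ 2.
Let u := A *m mask_col S (adjmx A *m psi).
Let v := B *m mask_col T (adjmx B *m psi).
Let l := sing_max2 (submx_of (adjmx A *m B) S T).

Lemma landau_pollak_pure : a + b <= 1 + (Num.sqrt l)%:C%C.
Proof.
have a_ge0 : 0 <= a by apply: sumr_ge0 => i _; apply: exprn_ge0.
have b_ge0 : 0 <= b by apply: sumr_ge0 => i _; apply: exprn_ge0.
have [_ _ l_ge0] := sing_max2_spec (submx_of (adjmx A *m B) S T) T_gt0.
have proj_dot (P : 'M[R[i]]_d) (S' : {set 'I_d}) :
    (adjmx psi *m (P *m mask_col S' (adjmx P *m psi))) 0 0 =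
    \sum_(i in S') `|(adjmx P *m psi) i 0| ^+ 2.
  by rewrite mulmxA -[adjmx psi *m P]adjmxK adjmxM adjmxK adjmx_mul_mask_col.
apply: (@landau_pollak_complex _ a b ((adjmx u *m v) 0 0)) => //.
  have := cauchy_schwarz_cnorm2 psi (u + v).
  rewrite psi_unit mul1r mulmxDr mxE !proj_dot ger0_norm ?addr_ge0 //.
  by rewrite cnorm2D /u /v !cnorm2_unitary // !cnorm2_mask_col.
rewrite /u /v adjmxM -!mulmxA (mulmxA (adjmx A)) adjmx_mask_col_mul.
apply: (le_trans (cauchy_schwarz_cnorm2 _ _)).
rewrite cnorm2_mask_col cnorm2_mask_col -/a; apply: ler_wpM2l => //.
have -> : b = cnorm2 (mask_col T (adjmx B *m psi)) by rewrite cnorm2_mask_col.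
by apply: submx_of_bound => [|j jNT]; rewrite ?onb_adjmx_mul // mxE (negbTE jNT).
Qed.

End PureState.

Lemma ReD (R : rcfType) (x y : R[i]) : complex.Re (x + y) = complex.Re x + complex.Re y.
Proof. by case: x; case: y. Qed.

Lemma Re_sum (R : rcfType) (I : finType) (P : pred I) (F : I -> R[i]) :
  complex.Re (\sum_(i | P i) F i) = \sum_(i | P i) complex.Re (F i).
Proof. exact: (big_morph _ (@ReD R)). Qed.

Lemma Re_le (R : rcfType) (x y : R[i]) : x <= y -> complex.Re x <= complex.Re y.
Proof. by rewrite lecE => /andP[]. Qed.

Lemma cnorm2_delta (R : realType) n (k : 'I_n) : cnorm2 (delta_mx k 0 : 'cV[R[i]]_n) = 1.
Proof.
rewrite cnorm2E (bigD1 k) //= big1 ?addr0 => [|j /negbTE neq_jk].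
  by rewrite mxE !eqxx normr1 expr1n.
by rewrite mxE neq_jk normr0 expr0n.
Qed.

Lemma state_pure_decomposition (R : realType) d (rho : 'M[R[i]]_d) : is_state rho ->
  exists (w : 'I_d -> R[i]) (psi : 'I_d -> 'cV[R[i]]_d),
    [/\ forall k, 0 <= w k, \sum_k w k = 1, forall k, cnorm2 (psi k) = 1 &
        forall (X : 'M[R[i]]_d) i,
          (adjmx X *m rho *m X) i i = \sum_k w k * `|(adjmx X *m psi k) i 0| ^+ 2].
Proof.
case=> /hermitian_unitary_diag[P [D [P'P PP' _ rho_eq]]] rho_psd rho_tr.
have rhoE m (Y : 'M_(d, m)) : adjmx Y *m rho *m Y = adjmx (P *m Y) *m diag_mx D *m (P *m Y).
  by rewrite rho_eq adjmxM !mulmxA.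
pose psi k : 'cV_d := adjmx P *m delta_mx k 0.
have P_psi k : P *m psi k = delta_mx k 0 by rewrite mulmxA PP' mul1mx.
exists (fun k => D 0 k), psi; split.
- move=> k; have := rho_psd (psi k); rewrite rhoE P_psi mulmx_adj_diagE.
  rewrite (bigD1 k) //= big1 ?addr0 => [|j /negbTE neq_jk]; last first.
    by rewrite mxE neq_jk normr0 expr0n mulr0.
  by rewrite mxE !eqxx normr1 expr1n mulr1.
- by rewrite -rho_tr rho_eq -mulmxA mxtrace_mulC -mulmxA PP' mulmx1 mxtrace_diag.
- by move=> k; rewrite cnorm2_unitary ?cnorm2_delta // adjmxK.
- move=> X i; rewrite rhoE mulmx_adj_diagE; apply: eq_bigr => k _.
  by rewrite mulmxA -adjmxM -colE [in RHS]mxE adjmxE norm_conjC.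
Qed.

Section MixedState.
Variables (R : realType) (d : nat) (rho : 'M[R[i]]_d).
Hypothesis rho_state : is_state rho.

Lemma state_diag_ge0 (X : 'M[R[i]]_d) i : 0 <= complex.Re ((adjmx X *m rho *m X) i i).
Proof.
have [w [psi [w_ge0 _ _ rhoE]]] := state_pure_decomposition rho_state.
rewrite rhoE -lecR RRe_real ?ger0_real ?sumr_ge0 // => k _.
all: by rewrite mulr_ge0 ?exprn_ge0.
Qed.

Lemma state_diag_sum (X : 'M[R[i]]_d) : onb X ->
  \sum_i complex.Re ((adjmx X *m rho *m X) i i) = 1.
Proof.
move=> X_onb; have [w [psi [_ w_sum1 psi_unit rhoE]]] := state_pure_decomposition rho_state.
have X'_onb : onb (adjmx X) by rewrite /onb adjmxK; apply: mulmx1C.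
rewrite -Re_sum (eq_bigr _ (fun i _ => rhoE X i)) exchange_big /= -[1]/(complex.Re 1) -w_sum1.
congr complex.Re; apply: eq_bigr => k _.
by rewrite -mulr_sumr -cnorm2E cnorm2_unitary ?psi_unit ?mulr1.
Qed.

Variables (A B : 'M[R[i]]_d).
Hypotheses (A_onb : onb A) (B_onb : onb B).

Lemma landau_pollak (S T : {set 'I_d}) : (0 < #|T|)%N ->
  \sum_(i in S) complex.Re ((adjmx A *m rho *m A) i i) +
  \sum_(j in T) complex.Re ((adjmx B *m rho *m B) j j)
  <= 1 + sing_max (submx_of (adjmx A *m B) S T).
Proof.
move=> T_gt0; have [w [psi [w_ge0 w_sum1 psi_unit rhoE]]] := state_pure_decomposition rho_state.
rewrite sing_maxE -!Re_sum -ReD -[1 + _]/(complex.Re (1 + (Num.sqrt _)%:C%C)).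
apply: Re_le; rewrite (eq_bigr _ (fun i _ => rhoE A i)) (eq_bigr _ (fun j _ => rhoE B j)).
rewrite exchange_big [X in _ + X]exchange_big /= -big_split /=.
rewrite -[X in _ <= X]mul1r -{1}w_sum1 mulr_suml; apply: ler_sum => k _.
rewrite -!mulr_sumr -mulrDr; apply: ler_wpM2l => //.
exact: landau_pollak_pure.
Qed.

End MixedState.

Section SubmatrixNorms.
Variables (R : realType) (d : nat) (U : 'M[R[i]]_d).
Hypothesis U_onb : onb U.

Definition submx_sing_maxs (k : nat) : set R :=
  [set x | exists S T : {set 'I_d}, [/\ (0 < #|S|)%N, (0 < #|T|)%N,
     (#|S| + #|T| = k.+1)%N & x = sing_max (submx_of U S T)]].

Lemma s_seqE k : s_seq U k.+1 = sup (submx_sing_maxs k.+1).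
Proof. by []. Qed.

Lemma submx_sing_maxs_le1 k : ubound (submx_sing_maxs k) 1.
Proof.
move=> x [S [T [_ T_gt0 _ ->]]]; rewrite sing_maxE -sqrtr1.
exact/ler_wsqrtr/sing_max2_submx_le1.
Qed.

Lemma has_ubound_submx_sing_maxs k : has_ubound (submx_sing_maxs k).
Proof. by exists 1; apply: submx_sing_maxs_le1. Qed.

Lemma s_seq_ge0 k : 0 <= s_seq U k.
Proof.
case: k => [//|k]; rewrite s_seqE.
have [[x Ex]|empty] := pselect (submx_sing_maxs k.+1 !=set0)%classic; last first.
  by rewrite sup_out // => -[].
apply: le_trans (ub_le_sup (has_ubound_submx_sing_maxs _) Ex).
by have [S [T [_ _ _ ->]]] := Ex; apply: sqrtr_ge0.
Qed.

Lemma sing_max_le_s_seq (S T : {set 'I_d}) : (0 < #|S|)%N -> (0 < #|T|)%N ->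
  sing_max (submx_of U S T) <= s_seq U (#|S| + #|T|).-1.
Proof.
move=> S_gt0 T_gt0; have -> : (#|S| + #|T|).-1 = (#|S| + #|T|).-2.+1 by lia.
rewrite s_seqE; apply: ub_le_sup; first exact: has_ubound_submx_sing_maxs.
by exists S, T; split => //; lia.
Qed.

Lemma s_seq_le1 k : s_seq U k <= 1.
Proof.
case: k => [|k]; first exact: ler01.
rewrite s_seqE; have [nonempty|empty] := pselect (submx_sing_maxs k.+1 !=set0)%classic.
  exact: ge_sup (@submx_sing_maxs_le1 _).
by rewrite sup_out ?ler01 // => -[].
Qed.

Lemma s_seq_top : (0 < d)%N -> s_seq U d = 1.
Proof.
move=> d_gt0; apply/eqP; rewrite eq_le s_seq_le1 /=.
have T_gt0 : (0 < #|[set Ordinal d_gt0]|)%N by rewrite cards1.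
have S_gt0 : (0 < #|[set: 'I_d]|)%N by rewrite cardsT card_ord.
have card_ST : (#|[set: 'I_d]| + #|[set Ordinal d_gt0]|).-1 = d.
  by rewrite cardsT card_ord cards1 addn1.
have := sing_max_le_s_seq S_gt0 T_gt0.
by rewrite card_ST sing_maxE sing_max2_full_rows // sqrtr1.
Qed.

Lemma s_seq_nondecr k : (k < d)%N -> s_seq U k <= s_seq U k.+1.
Proof.
case: k => [|k] lt_kd; first exact: s_seq_ge0.
rewrite [s_seq U k.+1]s_seqE.
have [nonempty|empty] := pselect (submx_sing_maxs k.+1 !=set0)%classic; last first.
  by rewrite sup_out ?s_seq_ge0 // => -[].
apply: ge_sup => // x [S [T [S_gt0 T_gt0 card_ST ->]]].
have [i iNS] : exists i, i \notin S.
  apply/existsP; rewrite -negb_forall; apply: contraTN lt_kd => /forallP S_full.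
  have S_eq : S = finset.setT by apply/setP => j; rewrite finset.in_setT S_full.
  by move: card_ST; rewrite S_eq cardsT card_ord; lia.
apply: (@le_trans _ _ (sing_max (submx_of U (i |: S) T))).
  by rewrite !sing_maxE; apply/ler_wsqrtr/sing_max2_submx_mono/T_gt0/finset.subsetUr.
have card_iST : (#|i |: S| + #|T|).-1 = k.+2 by rewrite cardsU1 iNS -addnA card_ST.
by rewrite -card_iST; apply: sing_max_le_s_seq; rewrite // cardsU1 iNS.
Qed.

End SubmatrixNorms.

Lemma state_dim_gt0 (R : realType) d (rho : 'M[R[i]]_d) : is_state rho -> (0 < d)%N.
Proof.
case: d rho => [|//] rho [_ _].
by rewrite /mxtrace big_ord0 => /eqP; rewrite eq_sym oner_eq0.
Qed.

Theorem theorem3 (R : realType) (d : nat) (Aa Bb rho : 'M[R[i]]_d) (alpha : R) :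
  onb Aa -> onb Bb -> is_state rho -> 0 <= alpha ->
  let U := adjmx Aa *m Bb in
  let p := fun i : 'I_d => complex.Re ((adjmx Aa *m rho *m Aa) i i) in
  let q := fun j : 'I_d => complex.Re ((adjmx Bb *m rho *m Bb) j j) in
  tsallis alpha p + tsallis alpha q >= tsallis alpha (Wvec U).
Proof.
move=> A_onb B_onb rho_state alpha_ge0 /=.
set U := adjmx Aa *m Bb.
set p := fun i => complex.Re ((adjmx Aa *m rho *m Aa) i i).
set q := fun j => complex.Re ((adjmx Bb *m rho *m Bb) j j).
have d_gt0 := state_dim_gt0 rho_state.
have U_onb : onb U := onb_adjmx_mul A_onb B_onb.
have p_sum1 : \sum_i p i = 1 := state_diag_sum rho_state A_onb.
have q_sum1 : \sum_j q j = 1 := state_diag_sum rho_state B_onb.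
have W_sum1 : \sum_k Wvec U k = 1.
  rewrite /Wvec -(big_mkord xpredT (fun k => s_seq U k.+1 - s_seq U k)).
  by rewrite telescope_sumr // s_seq_top // subr0.
have pq_le_s (S T : {set 'I_d}) : (0 < #|S|)%N -> (0 < #|T|)%N -> (#|S| + #|T| <= d.+1)%N ->
    \sum_(i in S) p i + \sum_(j in T) q j <= 1 + s_seq U (#|S| + #|T|).-1.
  move=> S_gt0 T_gt0 _; apply: le_trans (landau_pollak rho_state A_onb B_onb S T_gt0) _.
  by rewrite lerD2l sing_max_le_s_seq.
rewrite !tsallis_sum_term // /Wvec.
exact: (sum_concave_increments_le (state_diag_ge0 rho_state Aa) (state_diag_ge0 rho_state Bb)
  p_sum1 q_sum1 (erefl : s_seq U 0 = 0) (s_seq_top U_onb d_gt0) (s_seq_ge0 U_onb)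
  (s_seq_nondecr U_onb) pq_le_s (tsallis_term0 alpha) (tsallis_term1 alpha)
  (tsallis_term_tangent alpha_ge0) d_gt0).
Qed.
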